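(* Let $p_{d,k,n}$ denote the number of directed plateau polyhypercubes of dimension $d$, width $k$ and lateral area $n$. Then for $d\geq 3$, $k\geq 1$ and $n\geq (d-1)k$, $$p_{d,k,n}=\sum_{j_2+j_3+\cdots+j_d=n}\ \prod_{l=2}^{d}\binom{j_l+k-2}{j_l-k},$$ where the sum is over nonnegative integers $j_2,\dots,j_d$.
   Context: Work in $\mathbb{Z}^d$ with orthonormal coordinate system $(0,\vec{i_1},\dots,\vec{i_d})$; a cell is a unit hypercube of the lattice. A polyhypercube of dimension $d$ is a finite union of cells, connected through their $(d-1)$-dimensional faces, defined up to translation. Its width is the number of distinct values of the $\vec{i_1}$-coordinate taken by its cells; its strata are its intersections with the layers of constant $\vec{i_1}$-coordinate. A plateau is a stratum that is a hyperrectangle. An elementary step is a positive move of one unit along one axis. A polyhypercube is directed if every cell can be reached from a distinguished root cell by a path of cells of the polyhypercube using only elementary steps. A directed plateau polyhypercube is a directed polyhypercube all of whose strata are plateaus. The lateral area of a polyhypercube is the sum, over $2\leq l\leq d$, of the areas (numbers of unit squares) of the polyominoes obtained by projecting it onto the planes $(\vec{i_1},\vec{i_l})$. Convention: for $n\geq 0$, $\binom{n}{k}=0$ when $k<0$ or $k>n$. *)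

From HB Require Import structures.
From mathcomp Require Import all_boot all_order all_algebra.
From mathcomp Require Import finmap.
Set Implicit Arguments. Unset Strict Implicit. Unset Printing Implicit Defensive.
Import Order.TTheory GRing.Theory Num.Theory.
Local Open Scope ring_scope.


(* A cell of Z^d is identified with its minimal corner, a d-tuple of
   integers.  Coordinates are 0-based: coordinate 0 is the i_1 axis and
   coordinate l (1 <= l < d) is the i_(l+1) axis. *)
Definition cell (d : nat) := (d.-tuple int)%type.

Definition coord (d : nat) (c : cell d) (l : nat) : int := nth 0 c l.

Definition adjacent (d : nat) (c c' : cell d) : bool :=
  [exists i : 'I_d, (absz (coord c i - coord c' i) == 1%N) &&
     [forall j : 'I_d, (j != i) ==> (coord c j == coord c' j)]].

Definition elem_step (d : nat) (c c' : cell d) : bool :=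
  [exists i : 'I_d, (coord c' i == coord c i + 1) &&
     [forall j : 'I_d, (j != i) ==> (coord c j == coord c' j)]].

Definition polyhypercube (d : nat) (P : {fset cell d}) : Prop :=
  (P != fset0)%fset /\
  forall a b, a \in P -> b \in P ->
    exists p : seq (cell d),
      [&& path (@adjacent d) a p, last a p == b & all (fun x => x \in P) p].

Definition directed (d : nat) (P : {fset cell d}) : Prop :=
  exists2 r, r \in P &
    forall c, c \in P ->
      exists p : seq (cell d),
        [&& path (@elem_step d) r p, last r p == c & all (fun x => x \in P) p].

Definition plateau_at (d : nat) (P : {fset cell d}) (x : int) : Prop :=
  exists lo hi : cell d,
    forall c : cell d, coord c 0 = x ->
      (c \in P <-> forall l, (1 <= l < d)%N ->
                     coord lo l <= coord c l <= coord hi l).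

Definition all_plateaus (d : nat) (P : {fset cell d}) : Prop :=
  forall c, c \in P -> plateau_at P (coord c 0).

Definition directed_plateau (d : nat) (P : {fset cell d}) : Prop :=
  [/\ polyhypercube P, directed P & all_plateaus P].

Definition width (d : nat) (P : {fset cell d}) : nat :=
  #|` [fset coord c 0 | c in P]%fset |%fset.

Definition lateral_area (d : nat) (P : {fset cell d}) : nat :=
  (\sum_(1 <= l < d) #|` [fset (coord c 0, coord c l) | c in P]%fset |%fset)%N.

(* Canonical representative of a translation class of a nonempty finite set
   of cells: the minimum of each coordinate is 0. *)
Definition normalized (d : nat) (P : {fset cell d}) : Prop :=
  forall l, (l < d)%N ->
    (forall c, c \in P -> 0 <= coord c l) /\ exists2 c, c \in P & coord c l = 0.

Definition counted (d k n : nat) (P : {fset cell d}) : Prop :=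
  [/\ normalized P, directed_plateau P, width P = k & lateral_area P = n].

Definition card_is (T : eqType) (A : T -> Prop) (N : nat) : Prop :=
  exists s : seq T, [/\ uniq s, (forall x, x \in s <-> A x) & size s = N].

(* Binomial coefficient on integer arguments: 0 if the lower index is
   negative (or the upper index is negative), else the usual 'C(a, b),
   which is 0 when b > a. *)
Definition binz (a b : int) : nat :=
  if (0 <= a) && (0 <= b) then 'C(absz a, absz b) else 0%N.

(* Right-hand side: j ranges over (d-1)-tuples (j_2,...,j_d) of
   nonnegative integers with sum n (each such j_l is <= n). *)
Definition rhs (d k n : nat) : nat :=
  (\sum_(j : (d.-1).-tuple 'I_n.+1 | \sum_(l < d.-1) (tnth j l : nat) == n)
     \prod_(l < d.-1)
        binz ((tnth j l : nat)%:Z + k%:Z - 2) ((tnth j l : nat)%:Z - k%:Z))%N.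

(* A directed plateau polyhypercube of width k is a stack of k boxes, one per
   stratum x = 0, ..., k - 1.  Along each lateral axis l, the box of stratum x
   occupies an interval [a_x, a_x + h_x), and these intervals are exactly the
   columns of the projection onto the plane (i_1, i_l), of area h_0 + ... + h_(k-1).
   Directedness says that each box can be entered from the previous one, i.e.
   a_x <= a_(x+1) < a_x + h_x on every axis, and normalization gives a_0 = 0.
   So the polyhypercubes of lateral area n correspond bijectively to (d-1)-tuples
   of such "directed column sequences" whose areas j_2, ..., j_d add up to n.
   Choosing the height j - i of the first column and the start of the second one
   inside it, the number N_k(j) of directed column sequences with k columns and
   area j satisfies N_k(j) = sum_(i < j) (j - i) N_(k-1)(i), which is solved by
   N_k(j) = binomial(j + k - 2, 2k - 2) = binomial(j + k - 2, j - k). *)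

From mathcomp Require Import all_boot ssralg ssrnum ssrint finmap zify.
Set Implicit Arguments. Unset Strict Implicit. Unset Printing Implicit Defensive.

Lemma leq_mem_sumn (s : seq nat) x : x \in s -> x <= sumn s.
Proof. by move/perm_to_rem/perm_sumn => ->; exact: leq_addr. Qed.

Lemma allpairs_dep_uniq (S T R : eqType) (f : S -> T -> R) (s : seq S) (t : S -> seq T) :
  uniq s -> {in s, forall x, uniq (t x)} ->
  (forall x1 x2 y1 y2, x1 \in s -> x2 \in s -> y1 \in t x1 -> y2 \in t x2 ->
      f x1 y1 = f x2 y2 -> x1 = x2 /\ y1 = y2) ->
  uniq [seq f x y | x <- s, y <- t x].
Proof.
move=> us ut hf; apply: (allpairs_uniq_dep (T := fun=> T)) => // -[x1 y1] [x2 y2].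
move=> /allpairsPdep[x1' [y1' [hx1 hy1 [-> ->]]]].
move=> /allpairsPdep[x2' [y2' [hx2 hy2 [-> ->]]]] /= e.
by have [ex ey] := hf _ _ _ _ hx1 hx2 hy1 hy2 e; subst.
Qed.

Lemma cardfsE_uniq (T : choiceType) (A : {fset T}) (s : seq T) :
  uniq s -> A =i s -> #|` A|%fset = size s.
Proof.
move=> us h; have -> : A = [fset y in s]%fset by apply/fsetP => y; rewrite h inE.
by rewrite card_fseq undup_id.
Qed.

Lemma cardfs_ge_uniq (T : choiceType) (A : {fset T}) (s : seq T) :
  uniq s -> {subset s <= A} -> size s <= #|` A|%fset.
Proof.
move=> us sA; rewrite -(@cardfsE_uniq _ [fset x in s]%fset) // => [|x]; last by rewrite inE.
by apply/fsubset_leq_card/fsubsetP => x; rewrite inE; exact: sA.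
Qed.

Lemma cardfs_le_seq (T : choiceType) (A : {fset T}) (s : seq T) :
  {subset A <= s} -> #|` A|%fset <= size s.
Proof.
move=> As; apply: leq_trans (size_undup s); rewrite -card_fseq.
by apply/fsubset_leq_card/fsubsetP => x /As; rewrite inE.
Qed.

Lemma fset_int_downclosed (A : {fset int}) :
  (forall z, z \in A -> 0 <= z)%R ->
  (forall z w, z \in A -> (0 <= w <= z)%R -> w \in A) ->
  forall z, (z \in A) = (0 <= z < #|` A|%fset%:Z)%R.
Proof.
move=> hge hdown z; have uP m : uniq (map Posz (iota 0 m)) by rewrite map_inj_uniq ?iota_uniq // => ? ? [].
apply/idP/idP => [hz|/andP[z0 zA]].
  have z0 := hge z hz.
  have sub : {subset map Posz (iota 0 `|z|.+1) <= A}.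
    by move=> _ /mapP[i hi ->]; apply: (hdown z) => //; rewrite mem_iota in hi; lia.
  by have := cardfs_ge_uniq (uP _) sub; rewrite size_map size_iota; lia.
apply/negPn/negP => hzA.
have : {subset A <= map Posz (iota 0 `|z|)}.
  move=> w hw; apply/mapP; exists `|w|; last by have := hge w hw; lia.
  rewrite mem_iota add0n; have [//|zw] := ltnP `|w| `|z|; case/negP: hzA.
  by apply: (hdown w) => //; have := hge w hw; lia.
by move/cardfs_le_seq; rewrite size_map size_iota; lia.
Qed.

Lemma finite_choice (T : Type) (y0 : T) (R : nat -> T -> Prop) k :
  (forall x, x < k -> exists y, R x y) -> exists f : nat -> T, forall x, x < k -> R x (f x).
Proof.
elim: k => [|k IH] h; first by exists (fun=> y0).
have [f hf] := IH (fun x hx => h x (leqW hx)); have [y hy] := h k (ltnSn k).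
by exists (fun x => if x == k then y else f x) => x hx; case: eqP => [->//|ne]; apply: hf; lia.
Qed.

Lemma path_reach_of_pred (T : choiceType) (e : rel T) (A : {fset T}) (f : T -> nat) r :
  (forall t, t \in A -> t != r -> exists2 p, p \in A & e p t && (f p < f t)) ->
  forall t, t \in A -> exists p, [&& path e r p, last r p == t & all (fun x => x \in A) p].
Proof.
move=> hpred t; have [m] := ubnP (f t); elim: m t => // m IH t ltm tA.
have [->|ne] := eqVneq t r; first by exists [::]; rewrite /= eqxx.
have [p pA /andP[ept ltp]] := hpred t tA ne.
have [q /and3P[q1 /eqP q2 q3]] := IH p (leq_trans ltp ltm) pA.
by exists (rcons q t); rewrite rcons_path last_rcons all_rcons q1 q2 ept tA q3 eqxx.
Qed.

Fixpoint cartesian (T : Type) (ss : seq (seq T)) : seq (seq T) :=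
  if ss is s :: ss' then [seq x :: y | x <- s, y <- cartesian ss'] else [:: [::]].

Lemma size_cartesian T (ss : seq (seq T)) : size (cartesian ss) = \prod_(s <- ss) size s.
Proof. by elim: ss => [|s ss IH] /=; rewrite ?big_nil ?big_cons // size_allpairs IH. Qed.

Lemma mem_cartesian_cons (T : eqType) (s : seq T) ss x c :
  (x :: c \in cartesian (s :: ss)) = (x \in s) && (c \in cartesian ss).
Proof.
by apply/allpairsP/andP => [[[x' c'] [/= h1 h2 [-> ->]]] // | [h1 h2]]; exists (x, c).
Qed.

Lemma uniq_cartesian (T : eqType) (ss : seq (seq T)) : all uniq ss -> uniq (cartesian ss).
Proof.
elim: ss => [|s ss IH] //= /andP[us uss].
by apply: allpairs_uniq => [||[x1 y1] [x2 y2] _ _ [-> ->]] //; exact: IH.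
Qed.

(** * Directed column sequences *)

(* A column (a, h) is the run of cells a, ..., a + h - 1: it is nonempty and
   each column starts inside the previous one. *)
Fixpoint directed_cols (s : seq (nat * nat)) : bool :=
  if s is p :: s' then
    [&& 0 < p.2, (if s' is q :: _ then p.1 <= q.1 < p.1 + p.2 else true)
      & directed_cols s']
  else true.

Definition col_area (s : seq (nat * nat)) := sumn (map snd s).

Definition col_shape k (s : seq (nat * nat)) :=
  [&& size s == k, directed_cols s & (head (0, 0) s).1 == 0].

Lemma directed_cols_pos s x : directed_cols s -> x < size s -> 0 < (nth (0, 0) s x).2.
Proof. by elim: s x => [|p s IH] [|x] //= /and3P[h _ hs] hx //; exact: IH. Qed.

Lemma directed_cols_step s x : directed_cols s -> x.+1 < size s ->
  (nth (0, 0) s x).1 <= (nth (0, 0) s x.+1).1 < (nth (0, 0) s x).1 + (nth (0, 0) s x).2.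
Proof.
elim: s x => [|p s IH] [|x] //=; first by case: s {IH} => [|q s] //= /and3P[].
by move=> /and3P[_ _ hs] hx; exact: IH.
Qed.

Lemma directed_cols_iota (f : nat -> nat * nat) m k :
  (forall x, m <= x < m + k -> 0 < (f x).2) ->
  (forall x, m <= x -> x.+1 < m + k -> (f x).1 <= (f x.+1).1 < (f x).1 + (f x).2) ->
  directed_cols [seq f x | x <- iota m k].
Proof.
elim: k m => [|k IH] m h1 h2 //=; apply/and3P; split.
- by apply: h1; lia.
- by case: k {IH h1} h2 => [|k] h2 //=; apply: h2; lia.
- by apply: IH => x hx; [apply: h1 | move=> hx'; apply: h2]; lia.
Qed.

(* The first column is (b, j - i), where i is the area of the other columns;
   the second column starts at some b' in [b, b + j - i). *)
Fixpoint enum_cols K j b : seq (seq (nat * nat)) :=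
  if K is K'.+1 then
    [seq (b, j - i) :: s | i <- iota 0 j,
                           s <- [seq s | b' <- iota b (j - i), s <- enum_cols K' i b']]
  else if 0 < j then [:: [:: (b, j)]] else [::].

Lemma mem_enum_cols K j b s : (s \in enum_cols K j b) =
  [&& size s == K.+1, directed_cols s, (head (0, 0) s).1 == b & col_area s == j].
Proof.
elim: K j b s => [|K IH] j b s /=.
  case: ifP => hj; case: s => [|[a h] [|q s]] //=; rewrite ?inE /col_area /= ?addn0 ?andbT.
  - apply/idP/idP => [/eqP [-> ->]|/and3P [_ /eqP -> /eqP ->]] //.
    by rewrite hj !eqxx.
  - by apply/negbTE/eqP => -[].
  - by symmetry; apply/negbTE/and3P => [[h0 _ /eqP e]]; move: hj; rewrite -e h0.
apply/allpairsPdep/idP => [[i [s' [hi /allpairsPdep [b' [s'' [hb' hs'' ->]]] ->]]]|].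
  move: hs'' hi hb'; rewrite IH !mem_iota.
  case: s'' => [|[a' h'] s''] //= /and4P [/eqP -> -> /eqP -> /eqP har] hi hb'.
  move: har; rewrite /col_area /= => ->; rewrite !eqxx andbT; apply/andP; split; lia.
case: s => [|[a h] s] //= /and4P [hsz /and3P [hh hch hok] /eqP hb /eqP har].
have hs : 0 < size s by move/eqP: hsz => [->].
exists (col_area s), s; split.
- by rewrite mem_iota; move: har; rewrite /col_area /=; lia.
- apply/allpairsPdep; exists (head (0, 0) s).1, s; split => //.
    rewrite mem_iota -hb; move: hs hch har; rewrite /col_area /=.
    by case: s {hsz hok} => // -[a' h'] s _ /=; lia.
  by rewrite IH -eqSS hsz hok !eqxx.
- by rewrite hb -har /col_area /= addnK.
Qed.

Lemma uniq_enum_cols K j b : uniq (enum_cols K j b).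
Proof.
elim: K j b => [|K IH] j b /=; first by case: ifP.
apply: allpairs_dep_uniq; first exact: iota_uniq.
- move=> i _; apply: allpairs_dep_uniq => //; first exact: iota_uniq.
  move=> b1 b2 s1 s2 _ _; rewrite !mem_enum_cols.
  by move=> /and4P[_ _ /eqP <- _] /and4P[_ _ /eqP <- _] ->.
- move=> i1 i2 s1 s2 _ _ /allpairsPdep [b1 [t1 [_ h1 ->]]].
  move=> /allpairsPdep [b2 [t2 [_ h2 ->]]] [_] et; subst t2; split => //.
  by move: h1 h2; rewrite !mem_enum_cols => /and4P[_ _ _ /eqP <-] /and4P[_ _ _ /eqP <-].
Qed.

Lemma sum_bin_diag K J : \sum_(i < J) 'C(i + K, K.*2) = 'C(J + K, K.*2.+1).
Proof.
elim: J => [|J IH]; first by rewrite big_ord0 bin_small //; lia.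
by rewrite big_ord_recr /= IH addSn binS addnC.
Qed.

Lemma sum_weighted_bin_diag K J :
  \sum_(i < J) (J - i) * 'C(i + K, K.*2) = 'C(J.+1 + K, K.*2.+2).
Proof.
elim: J => [|J IH]; first by rewrite big_ord0 bin_small //; lia.
have -> : \sum_(i < J.+1) (J.+1 - i) * 'C(i + K, K.*2) =
    \sum_(i < J.+1) (J - i) * 'C(i + K, K.*2) + \sum_(i < J.+1) 'C(i + K, K.*2).
  rewrite -big_split /=; apply: eq_bigr => i _.
  by rewrite subSn 1?mulSn 1?addnC // -ltnS.
by rewrite sum_bin_diag big_ord_recr /= subnn mul0n addn0 IH [in RHS]addSn binS.
Qed.

Definition num_directed_cols K j := if j is j'.+1 then 'C(j' + K, K.*2) else 0.

Lemma num_directed_colsS K j : \sum_(i < j) (j - i) * num_directed_cols K i = num_directed_cols K.+1 j.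
Proof.
case: j => [|J]; first by rewrite big_ord0.
rewrite big_ord_recl /= muln0 add0n addnS -addSn doubleS -sum_weighted_bin_diag.
by apply: eq_bigr => i _; rewrite /bump /= add1n subSS.
Qed.

Lemma size_enum_cols K j b : size (enum_cols K j b) = num_directed_cols K j.
Proof.
elim: K j b => [|K IH] j b /=; first by case: j => //= j; rewrite bin0.
have -> : iota 0 j = index_iota 0 j by rewrite /index_iota subn0.
rewrite size_allpairs_dep sumnE big_map big_mkord -num_directed_colsS; apply: eq_bigr => i _.
rewrite size_allpairs_dep sumnE big_map (eq_bigr (fun=> num_directed_cols K i)) => [|b' _]; last exact: IH.
by rewrite big_const_seq count_predT size_iota iter_addn_0 mulnC.
Qed.

Lemma binz_num_directed_cols k j : 0 < k ->
  binz (j%:Z + k%:Z - 2)%R (j%:Z - k%:Z)%R = num_directed_cols k.-1 j.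
Proof.
case: k => // K _; rewrite /binz; case: j => [|J] /=.
  by case: ifP => // /andP[_ h]; exfalso; lia.
case: (leqP K J) => hJ; last first.
  by rewrite [RHS]bin_small; [case: ifP => // /andP[_ h]; exfalso|]; lia.
case: ifP => [_|h]; last by exfalso; move: h; lia.
rewrite -[RHS]bin_sub; last lia.
congr 'C(_, _); lia.
Qed.

(** * Configurations *)

Definition config_shape d k (c : seq (seq (nat * nat))) :=
  (size c == d.-1) && all (col_shape k) c.

Definition valid_config d k n (c : seq (seq (nat * nat))) :=
  config_shape d k c && (sumn (map col_area c) == n).

Lemma mem_cartesian_cols K t c :
  (c \in cartesian [seq enum_cols K y 0 | y <- t]) =
  all (col_shape K.+1) c && (map col_area c == t).
Proof.
elim: t c => [|y t IH] [|s c] //=; rewrite ?andbF //.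
  by apply/negbTE/allpairsP => -[[? ?] [_ _ //]].
by rewrite mem_cartesian_cons IH mem_enum_cols eqseq_cons /col_shape -!andbA andbCA; do !bool_congr.
Qed.

Definition enum_configs d k n : seq (seq (seq (nat * nat))) :=
  [seq c | j : (d.-1).-tuple 'I_n.+1 <- [seq j <- index_enum ((d.-1).-tuple 'I_n.+1)
                   | \sum_(l < d.-1) nat_of_ord (tnth j l) == n],
           c <- cartesian [seq enum_cols k.-1 y 0 | y <- map val j]].

Lemma sumn_map_val m N (j : m.-tuple 'I_N) :
  sumn (map val j) = \sum_(l < m) (tnth j l : nat).
Proof. by rewrite sumnE big_map big_tuple. Qed.

Lemma mem_enum_configs d k n c : 0 < k ->
  (c \in enum_configs d k n) = valid_config d k n c.
Proof.
move=> k0; rewrite /valid_config /config_shape.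
apply/allpairsPdep/idP => [[j [c' [hj hc ->]]]|].
  move: hj hc; rewrite mem_filter mem_cartesian_cols -sumn_map_val (prednK k0).
  move=> /andP[/eqP hn _] /andP[-> /eqP hm].
  by rewrite -(size_map col_area) hm size_map size_tuple hn !eqxx.
move=> /andP[/andP[/eqP hsz ha] /eqP hn].
have hsz' : size [seq inord (col_area s) : 'I_n.+1 | s <- c] == d.-1 by rewrite size_map hsz.
have hval : map val (Tuple hsz') = map col_area c.
  rewrite /= -map_comp; apply/eq_in_map => s hs /=; rewrite inordK // ltnS -hn.
  exact/leq_mem_sumn/map_f.
exists (Tuple hsz'), c; split => //.
  by rewrite mem_filter mem_index_enum andbT -sumn_map_val hval hn.
by rewrite mem_cartesian_cols (prednK k0) ha hval eqxx.
Qed.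

Lemma uniq_enum_configs d k n : uniq (enum_configs d k n).
Proof.
apply: allpairs_dep_uniq; first by rewrite filter_uniq // index_enum_uniq.
  move=> j _; apply: uniq_cartesian; apply/allP => s /mapP [y _ ->].
  exact: uniq_enum_cols.
move=> j1 j2 c1 c2 _ _; rewrite !mem_cartesian_cols.
move=> /andP[_ /eqP h1] /andP[_ /eqP h2] ec; subst c2; split => //.
have : map val (val j1) = map val (val j2) by rewrite -h1 -h2.
by move=> /(inj_map val_inj)/val_inj.
Qed.

Lemma size_enum_configs d k n : 0 < k -> size (enum_configs d k n) = rhs d k n.
Proof.
move=> k0; rewrite size_allpairs_dep sumnE big_map big_filter.
apply: eq_bigr => j _; rewrite size_cartesian -map_comp big_map big_tuple.
by apply: eq_bigr => l _; rewrite /= size_enum_cols binz_num_directed_cols.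
Qed.

Definition mkcell d (f : nat -> int) : cell d := [tuple f i | i < d].

Lemma coord_mkcell d f l : l < d -> coord (mkcell d f) l = f l.
Proof. by move=> h; rewrite /coord (_ : l = Ordinal h) // nth_mktuple. Qed.

Lemma cell_ext d (t u : cell d) : (forall l, l < d -> coord t l = coord u l) -> t = u.
Proof.
move=> h; apply/val_inj/(@eq_from_nth _ 0%R); first by rewrite !size_tuple.
by move=> l; rewrite size_tuple; exact: h.
Qed.

Definition origin d : cell d := mkcell d (fun=> 0%R).

Definition lower d (t : cell d) i : cell d := mkcell d (fun j => coord t j - Posz (j == i))%R.

Definition weight d (t : cell d) := \sum_(i < d) `|coord t i|.

Lemma coord_lower d (t : cell d) i j : j < d ->
  coord (lower t i) j = (coord t j - Posz (j == i))%R.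
Proof. exact: coord_mkcell. Qed.

Lemma elem_step_lower d (t : cell d) i : i < d -> elem_step (lower t i) t.
Proof.
move=> hi; apply/existsP; exists (Ordinal hi); rewrite /= coord_lower // eqxx.
apply/andP; split; first by apply/eqP; lia.
apply/forallP => j; apply/implyP => hj; rewrite coord_lower //.
suff /negbTE -> : nat_of_ord j != i by lia.
by apply: contra hj => /eqP e; apply/eqP/val_inj.
Qed.

Lemma weight_lower d (t : cell d) i : i < d -> (0 < coord t i)%R -> weight (lower t i) < weight t.
Proof.
move=> hi hp; rewrite /weight (bigD1 (Ordinal hi)) //= [X in _ < X](bigD1 (Ordinal hi)) //=.
rewrite (eq_bigr (fun j : 'I_d => `|coord t j|)) => [|j hj]; first by rewrite coord_lower // eqxx; lia.
rewrite coord_lower //; suff /negbTE -> : nat_of_ord j != i by lia.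
by apply: contra hj => /eqP e; apply/eqP/val_inj.
Qed.

Lemma elem_step_coord d (a b : cell d) l : elem_step a b -> l < d ->
  (coord a l <= coord b l <= coord a l + 1)%R.
Proof.
move=> /existsP [i /andP [/eqP hi /forallP hj]] hl.
have [e|ne] := eqVneq (Ordinal hl) i; first by move: hi; rewrite -e /=; lia.
by have /implyP /(_ ne) /eqP := hj (Ordinal hl); rewrite /= => ->; lia.
Qed.

Lemma elem_step_adjacent d (a b : cell d) : elem_step a b -> adjacent a b && adjacent b a.
Proof.
move=> /existsP [i /andP [/eqP hi /forallP hj]].
apply/andP; split; apply/existsP; exists i; rewrite hi; apply/andP; split; try lia.
  by apply/forallP => j; apply/implyP => hji; have /implyP := hj j; apply.
by apply/forallP => j; apply/implyP => hji; have /implyP/(_ hji)/eqP -> := hj j.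
Qed.

Lemma directed_polyhypercube d (P : {fset cell d}) : directed P -> polyhypercube P.
Proof.
move=> [r hr hreach]; split; first by apply: contraTneq hr => ->; rewrite inE.
move=> a b ha hb.
have [pa /and3P [pa1 /eqP pa2 pa3]] := hreach a ha.
have [pb /and3P [pb1 /eqP pb2 pb3]] := hreach b hb.
have back : path (@adjacent d) a (rev (belast r pa)).
  by rewrite -pa2 rev_path; apply: sub_path pa1 => x y /elem_step_adjacent/andP[_ ->].
have back_last : last a (rev (belast r pa)) = r.
  by case/lastP: pa {pa1 pa3 back} pa2 => [|pa z] /= <-; rewrite ?belast_rcons ?rev_cons ?last_rcons.
have forth : path (@adjacent d) r pb.
  by apply: sub_path pb1 => x y /elem_step_adjacent/andP[-> _].
exists (rev (belast r pa) ++ pb).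
rewrite cat_path back back_last forth last_cat back_last pb2 eqxx all_cat pb3 /= andbT.
apply/allP => x; rewrite mem_rev => /mem_belast; rewrite inE => /predU1P[-> //|].
by move/allP: pa3; apply.
Qed.

Lemma path_coord_le d (a : cell d) p l : path (@elem_step d) a p -> l < d ->
  (coord a l <= coord (last a p) l)%R.
Proof.
elim: p a => [|b p IH] a /=; first by lia.
by move=> /andP [hab hp] hl; have := elem_step_coord hab hl; have := IH b hp hl; lia.
Qed.

Lemma path_coord0_between d (P : {fset cell d}) (a : cell d) p (z : int) : 0 < d ->
  path (@elem_step d) a p -> all (fun x => x \in P) (a :: p) ->
  (coord a 0 <= z <= coord (last a p) 0)%R -> exists2 u, u \in P & coord u 0 = z.
Proof.
move=> d0; elim: p a => [|b p IH] a /=; first by move=> _ /andP[ha _] hz; exists a => //; lia.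
move=> /andP [hab hp] /andP [ha hbp] hz.
have [<-|ne] := eqVneq (coord a 0) z; first by exists a.
by apply: (IH b hp hbp); have := elem_step_coord hab d0; lia.
Qed.

Lemma directed_root_origin d (P : {fset cell d}) r : normalized P -> r \in P ->
  (forall t, t \in P -> exists p, [&& path (@elem_step d) r p, last r p == t & all (fun x => x \in P) p]) ->
  r = origin d.
Proof.
move=> hn hr hreach; apply: cell_ext => l hl; rewrite coord_mkcell //.
have [hnn [t ht e0]] := hn l hl; have [p /and3P [hp /eqP et _]] := hreach t ht.
by have := path_coord_le hp hl; have := hnn r hr; rewrite et e0; lia.
Qed.

Lemma directed_pred d (P : {fset cell d}) r t :
  (forall t, t \in P -> exists p, [&& path (@elem_step d) r p, last r p == t & all (fun x => x \in P) p]) ->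
  r \in P -> t \in P -> t != r -> exists2 p, p \in P & elem_step p t.
Proof.
move=> hreach hr ht ne; have [p /and3P [h1 /eqP h2 h3]] := hreach t ht.
case/lastP: p h1 h2 h3 => [/= _ et|q y]; first by rewrite et eqxx in ne.
rewrite rcons_path last_rcons all_rcons => /andP [_ hst] <- /andP [_ hq].
by exists (last r q) => //; case/lastP: q hq {hst} => //= q z; rewrite all_rcons last_rcons => /andP[].
Qed.

Lemma directed_coord0 d (P : {fset cell d}) : 0 < d -> normalized P -> directed P ->
  forall z, (z \in [fset coord t 0 | t in P]%fset) = (0 <= z < (width P)%:Z)%R.
Proof.
move=> d0 hn [r hr hreach]; apply: fset_int_downclosed.
  by move=> _ /imfsetP[t ht ->]; have [h _] := hn 0 d0; exact: h.
move=> _ w /imfsetP[t ht ->] hw; have [p /and3P[hp /eqP et hpP]] := hreach t ht.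
have r0 : coord r 0 = 0%R by rewrite (directed_root_origin hn hr hreach) coord_mkcell.
have hall : all (fun x => x \in P) (r :: p) by rewrite /= hr.
have hz : (coord r 0 <= w <= coord (last r p) 0)%R by rewrite r0 et.
by have [u hu <-] := path_coord0_between d0 hp hall hz; apply/imfsetP; exists u.
Qed.

(** * The polyhypercube of a configuration *)

Definition grid d B : seq (cell d) :=
  [seq map_tuple (fun i : 'I_B.+1 => Posz i) t | t <- index_enum (d.-tuple 'I_B.+1)].

Lemma mem_grid d B (t : cell d) :
  (forall l, l < d -> (0 <= coord t l <= B%:Z)%R) -> t \in grid d B.
Proof.
move=> h; apply/mapP.
exists (map_tuple (fun z : int => inord `|z| : 'I_B.+1) t); first exact: mem_index_enum.
apply: cell_ext => l hl; have := h l hl.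
by rewrite /coord /= -map_comp (nth_map (0 : int)) ?size_tuple //= => hb; rewrite inordK; lia.
Qed.

(* Axis l >= 1 of a configuration c is described by the column sequence
   nth c (l - 1): its x-th column is the extent of stratum x along axis l. *)
Definition column (c : seq (seq (nat * nat))) l x := nth (0, 0) (nth [::] c l.-1) x.

Definition in_column (p : nat * nat) (z : int) := (p.1%:Z <= z < (p.1 + p.2)%:Z)%R.

Definition in_config d k c (t : cell d) :=
  [&& (0 <= coord t 0)%R, (coord t 0 < k%:Z)%R &
      [forall l : 'I_d, (0 < l) ==> in_column (column c l `|coord t 0|) (coord t l)]].

Definition config_bound k (c : seq (seq (nat * nat))) :=
  k + sumn [seq sumn [seq p.1 + p.2 | p <- s] | s <- c].

(* The grid only provides a finite set containing all cells satisfying [in_config]. *)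
Definition poly_of d k c : {fset cell d} :=
  [fset t in grid d (config_bound k c) | in_config k c t]%fset.

Lemma column_bound c l x : 0 < (column c l x).2 ->
  (column c l x).1 + (column c l x).2 <= sumn [seq sumn [seq p.1 + p.2 | p <- s] | s <- c].
Proof.
rewrite /column => h.
have hx : x < size (nth [::] c l.-1) by rewrite ltnNge; apply: contraL h => /(nth_default _) ->.
have hl : l.-1 < size c.
  by rewrite ltnNge; apply: contraL hx => /(nth_default _) ->.
apply: leq_trans (leq_mem_sumn (map_f _ (mem_nth [::] hl))).
exact/leq_mem_sumn/(map_f (fun p : nat * nat => p.1 + p.2))/mem_nth.
Qed.

Lemma mem_poly_of d k c (t : cell d) : (t \in poly_of d k c) = in_config k c t.
Proof.
rewrite !inE andb_idl // => /and3P[h0 h1 /forallP hl]; apply: mem_grid => -[|i] hi.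
  by rewrite /config_bound; lia.
have /implyP/(_ isT)/andP[/= a1 a2] := hl (Ordinal hi).
have /column_bound : 0 < (column c i.+1 `|coord t 0|).2 by lia.
rewrite /config_bound; lia.
Qed.

Lemma in_config_coord0 d k c (t : cell d) :
  in_config k c t -> (0 <= coord t 0)%R && (coord t 0 < k%:Z)%R.
Proof. by case/and3P => -> ->. Qed.

Lemma in_config_coord d k c (t : cell d) l : in_config k c t -> 0 < l < d ->
  in_column (column c l `|coord t 0|) (coord t l).
Proof. by case/and3P => _ _ /forallP h /andP[h1 h2]; have /implyP := h (Ordinal h2); apply. Qed.

Lemma poly_of_plateaus d k c : all_plateaus (poly_of d k c).
Proof.
move=> t; rewrite mem_poly_of => ht; set x := `|coord t 0|.
exists (mkcell d (fun l => Posz (column c l x).1)),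
       (mkcell d (fun l => Posz ((column c l x).1 + (column c l x).2) - 1)%R) => u hu.
rewrite mem_poly_of; split.
  move=> hb l /andP[hl1 hl2]; rewrite !coord_mkcell //.
  by have := in_config_coord hb (l := l); rewrite /in_column hu -/x; lia.
move=> h; apply/and3P; split; try (have := in_config_coord0 ht; rewrite hu; lia).
apply/forallP => l; apply/implyP => hl.
by have := ltn_ord l; have := h l; rewrite !coord_mkcell // /in_column hu -/x; lia.
Qed.

Lemma lower_lateral_in d k c (t : cell d) l : in_config k c t -> 0 < l < d ->
  (Posz (column c l `|coord t 0|).1 < coord t l)%R -> in_config k c (lower t l).
Proof.
move=> ht hl hlt; have /negbTE l0 : 0 != l by lia.
have hx : coord (lower t l) 0 = coord t 0 by rewrite coord_lower ?l0 /=; lia.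
have /andP[h0 h1] := in_config_coord0 ht; rewrite /in_config hx h0 h1 /=.
apply/forallP => j; apply/implyP => hj; have hj' : 0 < j < d by rewrite hj ltn_ord.
have := in_config_coord ht hj'; rewrite coord_lower // /in_column.
by case: eqP => [e|_]; [move: hlt; rewrite -e|]; lia.
Qed.

Definition bottom_cell d c x l0 (w : int) : cell d :=
  mkcell d (fun i => if i == 0 then Posz x else if i == l0 then w else Posz (column c i x).1).

Lemma coord_bottom_cell0 d c x l0 w : 0 < d -> coord (bottom_cell d c x l0 w) 0 = Posz x.
Proof. exact: coord_mkcell. Qed.

Lemma coord_bottom_cell d c x l0 w l : 0 < l < d ->
  coord (bottom_cell d c x l0 w) l = if l == l0 then w else Posz (column c l x).1.
Proof. by case/andP=> hl0 hld; rewrite coord_mkcell // ifN // -lt0n. Qed.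

Section ConfigPoly.

Variables (d k : nat) (c : seq (seq (nat * nat))).
Hypothesis shape : config_shape d k c.

Lemma col_shape_nth l : 0 < l < d -> col_shape k (nth [::] c l.-1).
Proof.
case/andP: shape => /eqP hs /allP ha hl; apply/ha/mem_nth; rewrite hs; lia.
Qed.

Lemma column_pos l x : 0 < l < d -> x < k -> 0 < (column c l x).2.
Proof.
by move=> /col_shape_nth/and3P[/eqP hs hd _] hx; apply: directed_cols_pos; rewrite ?hs.
Qed.

Lemma column_step l x : 0 < l < d -> x.+1 < k ->
  (column c l x).1 <= (column c l x.+1).1 < (column c l x).1 + (column c l x).2.
Proof.
by move=> /col_shape_nth/and3P[/eqP hs hd _] hx; apply: directed_cols_step; rewrite ?hs.
Qed.

Lemma column_start0 l : 0 < l < d -> (column c l 0).1 = 0.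
Proof. by move=> /col_shape_nth/and3P[_ _ /eqP h]; rewrite /column nth0. Qed.

Hypothesis d_gt0 : 0 < d.

Lemma bottom_cell_in x l0 w : x < k ->
  (0 < l0 < d -> in_column (column c l0 x) w) -> in_config k c (bottom_cell d c x l0 w).
Proof.
move=> hx hw; rewrite /in_config coord_bottom_cell0 //; apply/and3P; split; try lia.
apply/forallP => l; apply/implyP => hl.
have hl' : 0 < l < d by rewrite hl ltn_ord.
rewrite coord_bottom_cell //; case: eqP => [e|_]; first by move: hl'; rewrite e.
have := column_pos hl' hx; rewrite /in_column /=; lia.
Qed.

Lemma poly_of_width : width (poly_of d k c) = k.
Proof.
rewrite /width (@cardfsE_uniq _ _ (map Posz (iota 0 k))) ?size_map ?size_iota //.
  by rewrite map_inj_uniq ?iota_uniq // => x y [].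
move=> z; apply/imfsetP/mapP => [[t ht ->]|[x hx ->]].
  move: ht; rewrite mem_poly_of => /in_config_coord0 h.
  by exists `|coord t 0|; rewrite ?mem_iota; lia.
exists (bottom_cell d c x 0 0); last by rewrite coord_bottom_cell0.
by rewrite mem_poly_of bottom_cell_in //; rewrite mem_iota in hx; lia.
Qed.

Lemma poly_of_projection l : 0 < l < d ->
  #|` [fset (coord t 0, coord t l) | t in poly_of d k c]|%fset = col_area (nth [::] c l.-1).
Proof.
move=> hl; rewrite (@cardfsE_uniq _ _ [seq (Posz x, Posz y) | x <- iota 0 k,
                                        y <- iota (column c l x).1 (column c l x).2]).
- have /and3P[/eqP hsz _ _] := col_shape_nth hl.
  rewrite size_allpairs_dep /col_area -{1}(mkseq_nth (0, 0) (nth [::] c l.-1)) hsz.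
  by rewrite /mkseq -!map_comp; congr sumn; apply/eq_map => x; rewrite /= size_iota.
- apply: allpairs_dep_uniq => [||x1 x2 y1 y2 _ _ _ _ [-> ->]] //; first exact: iota_uniq.
  by move=> x _; exact: iota_uniq.
case=> z w; apply/imfsetP/allpairsPdep => [[t ht [-> ->]]|[x [y [hx hy [-> ->]]]]].
  move: ht; rewrite mem_poly_of => ht.
  have := in_config_coord0 ht; have := in_config_coord ht hl; rewrite /in_column => h1 h2.
  by exists `|coord t 0|, `|coord t l|; rewrite !mem_iota; split; try congr (_, _); lia.
exists (bottom_cell d c x l (Posz y)); last by rewrite coord_bottom_cell0 // coord_bottom_cell ?eqxx.
rewrite mem_iota in hx; rewrite mem_iota in hy.
by rewrite mem_poly_of bottom_cell_in // => _; rewrite /in_column; lia.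
Qed.

Lemma poly_of_lateral_area : lateral_area (poly_of d k c) = sumn (map col_area c).
Proof.
rewrite /lateral_area big_nat_cond (eq_bigr (fun l => col_area (nth [::] c l.-1))); last first.
  by move=> l /andP[hl _]; exact: poly_of_projection.
rewrite -big_nat_cond big_add1 /=; case/andP: shape => /eqP <- _.
by rewrite sumnE big_map (big_nth [::]).
Qed.

Lemma lower_stratum_in (t : cell d) : in_config k c t -> (0 < coord t 0)%R ->
  (forall l, 0 < l < d -> coord t l = Posz (column c l `|coord t 0|).1) ->
  in_config k c (lower t 0).
Proof.
move=> ht ht0 hbot; have /andP[_ htk] := in_config_coord0 ht.
have hx : coord (lower t 0) 0 = (coord t 0 - 1)%R by rewrite coord_lower // eqxx; lia.
have hlat l : 0 < l < d -> coord (lower t 0) l = coord t l.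
  by move=> hl; rewrite coord_lower; [have /negbTE -> : l != 0 by lia|lia]; rewrite /=; lia.
rewrite /in_config hx; apply/and3P; split; try lia.
apply/forallP => l; apply/implyP => hl; have hl' : 0 < l < d by rewrite hl ltn_ord.
rewrite hlat // (hbot _ hl') (_ : `|(coord t 0 - 1)%R| = `|coord t 0|.-1); last by lia.
have := column_step hl' (x := `|coord t 0|.-1); rewrite prednK /in_column; lia.
Qed.

Hypothesis k_gt0 : 0 < k.

Lemma in_config_origin : in_config k c (origin d).
Proof.
rewrite /in_config !coord_mkcell //; apply/and3P; split => //.
apply/forallP => l; apply/implyP => hl; have hl' : 0 < l < d by rewrite hl ltn_ord.
have := column_pos hl' k_gt0; rewrite coord_mkcell // /= /in_column column_start0 //; lia.
Qed.

Lemma poly_of_normalized : normalized (poly_of d k c).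
Proof.
move=> l hl; split.
  move=> t; rewrite mem_poly_of => ht.
  case: l hl => [|l] hl; first by have := in_config_coord0 ht; lia.
  by have := in_config_coord ht (l := l.+1); rewrite /in_column; lia.
by exists (origin d); rewrite ?mem_poly_of ?in_config_origin ?coord_mkcell.
Qed.

Lemma poly_of_pred (t : cell d) : t \in poly_of d k c -> t != origin d ->
  exists2 p, p \in poly_of d k c & elem_step p t && (weight p < weight t).
Proof.
rewrite mem_poly_of => ht hto; have /andP[ht0 _] := in_config_coord0 ht.
have lower_ok i : i < d -> (0 < coord t i)%R -> in_config k c (lower t i) ->
    exists2 p, p \in poly_of d k c & elem_step p t && (weight p < weight t).
  by move=> hi hti hin; exists (lower t i); rewrite ?mem_poly_of ?elem_step_lower ?weight_lower.
have [/existsP[l /andP[hl hlt]]|/existsPn hbot] :=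
  boolP [exists l : 'I_d, (0 < l) && (Posz (column c l `|coord t 0|).1 < coord t l)%R].
  have hl' : 0 < l < d by rewrite hl ltn_ord.
  by apply: lower_ok (lower_lateral_in ht hl' hlt) => //; lia.
have {}hbot l : 0 < l < d -> coord t l = Posz (column c l `|coord t 0|).1.
  case/andP=> hl hld; have := hbot (Ordinal hld); have := in_config_coord ht (l := l).
  by rewrite /in_column hl hld /=; lia.
have [t0|t0] := eqVneq (coord t 0) 0%R; last first.
  by apply: lower_ok (lower_stratum_in ht _ hbot) => //; lia.
case/eqP: hto; apply: cell_ext => -[|l] hl; rewrite coord_mkcell // ?t0 //.
by rewrite hbot ?t0 ?column_start0.
Qed.

Lemma poly_of_directed : directed (poly_of d k c).
Proof.
exists (origin d); first by rewrite mem_poly_of in_config_origin.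
exact: path_reach_of_pred poly_of_pred.
Qed.

End ConfigPoly.

Lemma poly_of_counted d k n c : 0 < d -> 0 < k -> valid_config d k n c ->
  @counted d k n (poly_of d k c).
Proof.
move=> d0 k0 /andP[hs /eqP hn]; split.
- exact: poly_of_normalized.
- have hdir := poly_of_directed hs d0 k0.
  by split; [exact: directed_polyhypercube | exact: hdir | exact: poly_of_plateaus].
- exact: poly_of_width.
- by rewrite poly_of_lateral_area.
Qed.

Lemma column_le_of_poly_of d k c1 c2 l x : 0 < d ->
  config_shape d k c1 -> poly_of d k c1 = poly_of d k c2 -> 0 < l < d -> x < k ->
  (column c2 l x).1 <= (column c1 l x).1 /\
  (column c1 l x).1 + (column c1 l x).2 <= (column c2 l x).1 + (column c2 l x).2.
Proof.
move=> d0 hs1 e hl hx; have hpos := column_pos hs1 hl hx.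
have hin w : in_column (column c1 l x) w -> in_column (column c2 l x) w.
  move=> hw; have : bottom_cell d c1 x l w \in poly_of d k c2.
    by rewrite -e mem_poly_of bottom_cell_in.
  by rewrite mem_poly_of => /in_config_coord/(_ hl); rewrite coord_bottom_cell0 // coord_bottom_cell ?eqxx.
have := hin (Posz (column c1 l x).1); have := hin (Posz ((column c1 l x).1 + (column c1 l x).2 - 1)).
rewrite /in_column; lia.
Qed.

Lemma poly_of_inj d k c1 c2 : 0 < d -> config_shape d k c1 -> config_shape d k c2 ->
  poly_of d k c1 = poly_of d k c2 -> c1 = c2.
Proof.
move=> d0 hs1 hs2 e; have /andP[/eqP hz1 _] := hs1; have /andP[/eqP hz2 _] := hs2.
apply: (@eq_from_nth _ [::]) => [|i hi]; first by rewrite hz1 hz2.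
rewrite hz1 in hi; have hl : 0 < i.+1 < d by lia.
have /and3P[/eqP hk1 _ _] := col_shape_nth hs1 hl; have /and3P[/eqP hk2 _ _] := col_shape_nth hs2 hl.
apply: (@eq_from_nth _ (0, 0)) => [|x hx]; first by rewrite hk1 hk2.
rewrite hk1 in hx.
have := column_le_of_poly_of d0 hs1 e hl hx; have := column_le_of_poly_of d0 hs2 (esym e) hl hx.
rewrite /column /=; case: (nth _ (nth _ c1 i) x) => a1 b1; case: (nth _ (nth _ c2 i) x) => a2 b2 /=.
by move=> h1 h2; congr (_, _); lia.
Qed.

(** * The configuration of a directed plateau polyhypercube *)

Definition stratum_box d (P : {fset cell d}) x (lo hi : cell d) :=
  forall t : cell d, coord t 0 = Posz x ->
    (t \in P <-> forall l, 0 < l < d -> (coord lo l <= coord t l <= coord hi l)%R).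

Definition config_of_boxes d k (lo hi : nat -> cell d) : seq (seq (nat * nat)) :=
  [seq [seq (`|coord (lo x) l|, `|(coord (hi x) l - coord (lo x) l)%R|.+1) | x <- iota 0 k]
     | l <- iota 1 d.-1].

Lemma column_config_of_boxes d k (lo hi : nat -> cell d) l x : 0 < l < d -> x < k ->
  column (config_of_boxes k lo hi) l x =
  (`|coord (lo x) l|, `|(coord (hi x) l - coord (lo x) l)%R|.+1).
Proof.
move=> hl hx; rewrite /column /config_of_boxes (nth_map 0) ?size_iota; last lia.
rewrite nth_iota; last lia.
by rewrite (nth_map 0) ?size_iota // nth_iota // add1n prednK //; lia.
Qed.

Section ConfigOfBoxes.

Variables (d k : nat) (P : {fset cell d}) (lo hi : nat -> cell d).
Hypotheses (d_gt0 : 0 < d) (boxes : forall x, x < k -> stratum_box P x (lo x) (hi x)).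
Hypothesis coord0P : forall z, (z \in [fset coord t 0 | t in P]%fset) = (0 <= z < k%:Z)%R.

Lemma box_nonempty x l : x < k -> 0 < l < d -> (coord (lo x) l <= coord (hi x) l)%R.
Proof.
move=> hx hl; have : Posz x \in [fset coord t 0 | t in P]%fset by rewrite coord0P; lia.
by case/imfsetP=> u hu eu; have := (boxes hx (esym eu)).1 hu l hl; lia.
Qed.

Definition box_corner x : cell d :=
  mkcell d (fun i => if i == 0 then Posz x else coord (lo x) i).

Lemma box_corner_in x : x < k -> box_corner x \in P.
Proof.
move=> hx; apply/(boxes hx); first by rewrite coord_mkcell.
move=> l hl; rewrite coord_mkcell ?ifN; try lia.
by have := box_nonempty hx hl; lia.
Qed.

Hypothesis hn : normalized P.

Lemma lo_ge0 x l : x < k -> 0 < l < d -> (0 <= coord (lo x) l)%R.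
Proof.
move=> hx hl; have [hnn _] := @hn l (proj2 (andP hl)).
have := hnn _ (box_corner_in hx); rewrite coord_mkcell ?ifN; lia.
Qed.

Lemma in_column_config_of_boxes x l z : x < k -> 0 < l < d ->
  in_column (column (config_of_boxes k lo hi) l x) z =
  (coord (lo x) l <= z <= coord (hi x) l)%R.
Proof.
move=> hx hl; rewrite column_config_of_boxes // /in_column /=.
by have := lo_ge0 hx hl; have := box_nonempty hx hl; move=> h1 h2; apply/idP/idP; lia.
Qed.

Lemma poly_of_config_of_boxes : poly_of d k (config_of_boxes k lo hi) = P.
Proof.
apply/fsetP => t; rewrite mem_poly_of.
have [ht0 | ht0] := boolP (0 <= coord t 0 < k%:Z)%R; last first.
  have /negbTE -> : t \notin P.
    by apply: contra ht0 => htP; rewrite -coord0P; apply/imfsetP; exists t.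
  by apply/negbTE; apply: contra ht0 => /in_config_coord0.
have hx : `|coord t 0| < k by lia.
have et : coord t 0 = Posz `|coord t 0| by lia.
have hbox := boxes hx et; case/andP: ht0 => h0 h1.
rewrite /in_config h0 h1 /=; apply/forallP/idP => [h|htP l].
  apply/hbox => l hl; have /implyP := h (Ordinal (proj2 (andP hl))).
  by rewrite in_column_config_of_boxes //= => /(_ (proj1 (andP hl))).
apply/implyP => hl; have hl' : 0 < l < d by rewrite hl ltn_ord.
by rewrite in_column_config_of_boxes //; exact: hbox.1 htP l hl'.
Qed.

Hypothesis origin_in : origin d \in P.

Lemma lo0 l : 0 < l < d -> coord (lo 0) l = 0%R.
Proof.
move=> hl; have : coord (origin d) 0 \in [fset coord t 0 | t in P]%fset.
  by apply/imfsetP; exists (origin d).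
rewrite coord0P coord_mkcell // => /andP[_ k_gt0]; have k0 : 0 < k by lia.
have o0 : coord (origin d) 0 = Posz 0 by rewrite coord_mkcell.
have /(_ l hl) := (boxes k0 o0).1 origin_in.
by have := lo_ge0 k0 hl; rewrite coord_mkcell; lia.
Qed.

Hypothesis has_pred : forall t, t \in P -> t != origin d -> exists2 p, p \in P & elem_step p t.

Lemma lo_chain x l : x.+1 < k -> 0 < l < d ->
  (coord (lo x) l <= coord (lo x.+1) l <= coord (hi x) l)%R.
Proof.
move=> hx hl.
have hne : box_corner x.+1 != origin d.
  by apply/eqP => /(congr1 (fun t : cell d => coord t 0)); rewrite !coord_mkcell.
have [p hp /existsP [i /andP [/eqP hpi /forallP hj]]] := has_pred (box_corner_in hx) hne.
have hpj j : j < d -> j != i -> coord p j = coord (box_corner x.+1) j.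
  by move=> hjd ne; have /implyP /(_ ne) /eqP := hj (Ordinal hjd).
have [i0|i_gt0] := posnP i.
  have hp0 : coord p 0 = Posz x by move: hpi; rewrite i0 coord_mkcell //=; lia.
  have := (boxes (ltnW hx) hp0).1 hp l hl.
  by rewrite hpj ?coord_mkcell ?ifN ?i0 //; lia.
have hp0 : coord p 0 = Posz x.+1 by rewrite hpj ?coord_mkcell // neq_ltn i_gt0.
have := (boxes hx hp0).1 hp i; rewrite i_gt0 ltn_ord => /(_ isT).
by move: hpi; rewrite coord_mkcell ?ifN -?lt0n //; lia.
Qed.

Lemma config_of_boxes_shape : config_shape d k (config_of_boxes k lo hi).
Proof.
apply/andP; split; first by rewrite size_map size_iota.
apply/allP => s /mapP[l hl ->]; have hl' : 0 < l < d by rewrite mem_iota in hl; lia.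
apply/and3P; split; first by rewrite size_map size_iota.
  apply: directed_cols_iota => // x hx; rewrite add0n => hxk.
  have := lo_chain hxk hl'; have := box_nonempty (ltnW hxk) hl'.
  by have := lo_ge0 (ltnW hxk) hl'; have := lo_ge0 hxk hl'; rewrite /=; lia.
by case: k lo0 => // k' lo0; rewrite /= lo0.
Qed.

End ConfigOfBoxes.

Lemma counted_is_poly_of d k n (P : {fset cell d}) : 0 < d -> @counted d k n P ->
  exists2 c, valid_config d k n c & poly_of d k c = P.
Proof.
move=> d0 [hn [_ hdir hplat] hw hla].
have coord0P := directed_coord0 d0 hn hdir; rewrite hw in coord0P.
have [r hr hreach] := hdir; have r0 := directed_root_origin hn hr hreach; subst r.
have hbox x : x < k -> exists b : cell d * cell d, stratum_box P x b.1 b.2.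
  move=> hx; have : Posz x \in [fset coord t 0 | t in P]%fset by rewrite coord0P; lia.
  by case/imfsetP=> u hu eu; have [lo [hi hb]] := hplat u hu; exists (lo, hi); rewrite /stratum_box eu.
have [b hb] := finite_choice (origin d, origin d) hbox.
have hshape := config_of_boxes_shape d0 hb coord0P hn hr (fun t ht => directed_pred hreach hr ht).
have hP := poly_of_config_of_boxes d0 hb coord0P hn.
exists (config_of_boxes k (fun x => (b x).1) (fun x => (b x).2)) => //.
rewrite /valid_config hshape -(poly_of_lateral_area hshape d0) hP; exact/eqP.
Qed.

Theorem theorem2 (d k n : nat) :
  (3 <= d)%N -> (1 <= k)%N -> ((d - 1) * k <= n)%N ->
  card_is (@counted d k n) (rhs d k n).
Proof.
move=> hd hk _; have d0 : 0 < d by lia.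
exists (map (poly_of d k) (enum_configs d k n)); split.
- rewrite map_inj_in_uniq ?uniq_enum_configs // => c1 c2.
  by rewrite !mem_enum_configs // => /andP[hs1 _] /andP[hs2 _]; exact: poly_of_inj.
- move=> P; split => [/mapP[c hc ->]|/(counted_is_poly_of d0)[c hc <-]].
    by apply: poly_of_counted => //; rewrite -mem_enum_configs.
  by apply: map_f; rewrite mem_enum_configs.
- by rewrite size_map size_enum_configs.
Qed.
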